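(* Let $A:\mathbb{R}^n\rightrightarrows\mathbb{R}^n$ be a maximally monotone operator, let $x^*$ satisfy $0\in A(x^* )$, and let $\tilde A=I-J_A$ where $J_A=(I+A)^{-1}$. Assume $\tilde A$ is differentiable. Let $X:[0,\infty)\to\mathbb{R}^n$ be a solution of $$\dot X(t)=J_A(X(t))-X(t)=-\tilde A(X(t)),\qquad X(0)=x_0.$$ Then for every $t>0$, $$\|\dot X(t)\|^2=\|\tilde A(X(t))\|^2\leqslant\frac{\|x_0-x^*\|^2}{2t}.$$
   Context: $J_A=(I+A)^{-1}$ is the resolvent of $A$ (single-valued and defined on all of $\mathbb{R}^n$ since $A$ is maximally monotone); $\tilde A=I-J_A$ is the Yosida approximation of $A$. $\|\cdot\|$ is the Euclidean norm. *)

From HB Require Import structures.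
From mathcomp Require Import all_boot all_order all_algebra.
From mathcomp Require Import all_classical all_reals all_analysis.
Set Implicit Arguments. Unset Strict Implicit. Unset Printing Implicit Defensive.
Import Order.TTheory GRing.Theory Num.Theory.
Import numFieldNormedType.Exports.
Local Open Scope classical_set_scope.
Local Open Scope ring_scope.

Definition dotv {R : realType} {n : nat} (u v : 'rV[R]_n) : R :=
  \sum_(i < n) u 0 i * v 0 i.
Definition enorm {R : realType} {n : nat} (u : 'rV[R]_n) : R :=
  Num.sqrt (dotv u u).

Definition monotone_op {R : realType} {n : nat} (A : 'rV[R]_n -> set 'rV[R]_n) :=
  forall x y u v, A x u -> A y v -> 0 <= dotv (u - v) (x - y).

Definition maximally_monotone {R : realType} {n : nat}
  (A : 'rV[R]_n -> set 'rV[R]_n) :=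
  monotone_op A /\
  forall B : 'rV[R]_n -> set 'rV[R]_n, monotone_op B ->
    (forall x, A x `<=` B x) -> B = A.

(* resolvent J_A = (I + A)^{-1}: J_A x is the (unique, for A maximally
   monotone) p with x ∈ p + A p, i.e. x - p ∈ A p. *)
Definition resolvent {R : realType} {n : nat} (A : 'rV[R]_n -> set 'rV[R]_n)
  (x : 'rV[R]_n) : 'rV[R]_n :=
  xget 0 [set p | A p (x - p)].

Definition yosida {R : realType} {n : nat} (A : 'rV[R]_n -> set 'rV[R]_n)
  (x : 'rV[R]_n) : 'rV[R]_n := x - resolvent A x.

From HB Require Import structures.
From mathcomp Require Import all_boot all_order all_algebra.
From mathcomp Require Import all_classical all_reals all_analysis.
From mathcomp Require Import ring lra.
Import Order.TTheory GRing.Theory Num.Theory.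
Import numFieldNormedType.Exports.
Local Open Scope classical_set_scope.
Local Open Scope ring_scope.

(* Minty's theorem makes the resolvent total, i.e. x - J_A x is in A (J_A x) for
   every x.  In finite dimension it follows from the finite intersection
   property on the compact ball {p | 0 <= <y - u0 - p, p - a0>}: for finitely
   many pairs (b_i, c_i) with <c_i - c_j, b_i - b_j> <= 0, the point
   p = V(l)/2 works, where l maximises over the simplex the concave function
   l |-> sum_i l_i <c_i, b_i> - |V(l)|^2/4 with V(l) = sum_i l_i (b_i + c_i);
   this function is <= 0 by monotonicity, and its first-order optimality
   conditions towards the vertices give <c_j - p, p - b_j> >= 0.
   Monotonicity of A then makes the Yosida approximation firmly nonexpansive,
   hence its derivative positive semidefinite, and gives
   <Ã x, x - x*> >= |Ã x|^2.  Along X' = -Ã X the Lyapunov function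
   E(s) = s |Ã X(s)|^2 + |X(s) - x*|^2 / 2 has
   E'(s) = |Ã X|^2 - <Ã X, X - x*> - 2 s <DÃ(X) Ã X, Ã X> <= 0,
   so t |Ã X(t)|^2 <= E(t) <= E(0) = |x0 - x*|^2 / 2. *)

Section InnerProduct.
Context {R : realType} {n : nat}.
Implicit Types u v w : 'rV[R]_n.

Lemma dotvC u v : dotv u v = dotv v u.
Proof. by apply: eq_bigr => i _; rewrite mulrC. Qed.

Lemma dotvDl u v w : dotv (u + v) w = dotv u w + dotv v w.
Proof. by rewrite /dotv -big_split; apply: eq_bigr => i _; rewrite mxE mulrDl. Qed.

Lemma dotvZl (a : R) u v : dotv (a *: u) v = a * dotv u v.
Proof. by rewrite /dotv big_distrr; apply: eq_bigr => i _; rewrite !mxE /= mulrA. Qed.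

Lemma dotvNl u v : dotv (- u) v = - dotv u v.
Proof. by rewrite -scaleN1r dotvZl mulN1r. Qed.

Lemma dotvBl u v w : dotv (u - v) w = dotv u w - dotv v w.
Proof. by rewrite dotvDl dotvNl. Qed.

Lemma dotv0l v : dotv 0 v = 0.
Proof. by rewrite -(scale0r 0) dotvZl mul0r. Qed.

Lemma dotvDr u v w : dotv u (v + w) = dotv u v + dotv u w.
Proof. by rewrite dotvC dotvDl !(dotvC u). Qed.

Lemma dotvZr (a : R) u v : dotv u (a *: v) = a * dotv u v.
Proof. by rewrite dotvC dotvZl dotvC. Qed.

Lemma dotvNr u v : dotv u (- v) = - dotv u v.
Proof. by rewrite dotvC dotvNl dotvC. Qed.

Lemma dotvBr u v w : dotv u (v - w) = dotv u v - dotv u w.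
Proof. by rewrite dotvDr dotvNr. Qed.

Lemma dotv0r v : dotv v 0 = 0.
Proof. by rewrite dotvC dotv0l. Qed.

Lemma dotvv_ge0 u : 0 <= dotv u u.
Proof. by apply: sumr_ge0 => i _; rewrite -expr2 sqr_ge0. Qed.

Lemma dotv_suml m (F : 'I_m -> 'rV[R]_n) w :
  dotv (\sum_(i < m) F i) w = \sum_(i < m) dotv (F i) w.
Proof. exact: (big_morph (dotv^~ w) (fun u v => dotvDl u v w) (dotv0l w)). Qed.

Lemma dotv_sumr m (F : 'I_m -> 'rV[R]_n) w :
  dotv w (\sum_(i < m) F i) = \sum_(i < m) dotv w (F i).
Proof. exact: (big_morph (dotv w) (dotvDr w) (dotv0r w)). Qed.

Lemma sqr_enorm u : enorm u ^+ 2 = dotv u u.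
Proof. by rewrite sqr_sqrtr // dotvv_ge0. Qed.

Lemma enormN u : enorm (- u) = enorm u.
Proof. by rewrite /enorm dotvNl dotvNr opprK. Qed.

Lemma sqr_coord_le_dotv u i : u 0 i ^+ 2 <= dotv u u.
Proof.
rewrite /dotv (bigD1 i) //= -expr2 lerDl.
by apply: sumr_ge0 => k _; rewrite -expr2 sqr_ge0.
Qed.

Lemma cvg_dotv {T : Type} {F : set_system T} {FF : Filter F}
    {f g : T -> 'rV[R]_n} {a b : 'rV[R]_n} :
  f @ F --> a -> g @ F --> b -> (fun x => dotv (f x) (g x)) @ F --> dotv a b.
Proof.
move=> fa gb.
apply: (@cvg_big _ _ _ _ _ add_continuous) => i _.
apply: cvgM; first exact: (cvg_comp _ _ fa (@coord_continuous R 1 n 0 i a)).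
exact: (cvg_comp _ _ gb (@coord_continuous R 1 n 0 i b)).
Qed.

End InnerProduct.

Section VectorDerivatives.
Context {R : realType}.

Lemma is_derive_comp {V W : normedModType R} {f : R -> V} {g : V -> W}
    {s : R} {df : V} :
  is_derive s 1 f df -> differentiable g (f s) ->
  is_derive s 1 (g \o f) ('d g (f s) df).
Proof.
move=> fdf gd.
have fd : differentiable f s by apply/derivable1_diffP; exact: ex_derive.
have fdf1 : 'd f s 1 = df by rewrite -deriveE // derive_val.
apply: DeriveDef; first by apply/derivable1_diffP; exact: differentiable_comp.
by rewrite deriveE; [rewrite diff_comp //= fdf1 | exact: differentiable_comp].
Qed.

Lemma is_derive_coord {n : nat} {f : R -> 'rV[R]_n} {s : R} {df : 'rV[R]_n} i :
  is_derive s 1 f df -> is_derive s 1 (fun r => f r 0 i) (df 0 i).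
Proof.
move=> [fd <-].
have coord_fd : (fun h : R => h^-1 *: (f (h *: 1 + s) 0 i - f s 0 i)) @ 0^' -->
    'D_1 f s 0 i.
  have -> : (fun h : R => h^-1 *: (f (h *: 1 + s) 0 i - f s 0 i)) =
      (fun M : 'rV[R]_n => M 0 i) \o (fun h => h^-1 *: (f (h *: 1 + s) - f s)).
    by apply/funext => h; rewrite /= !mxE.
  exact: cvg_comp _ _ fd (@coord_continuous R 1 n 0 i _).
by apply: DeriveDef; [exact: cvgP coord_fd | exact: cvg_lim coord_fd].
Qed.

Lemma is_derive_dotv {n : nat} {f g : R -> 'rV[R]_n} {s : R} {df dg : 'rV[R]_n} :
  is_derive s 1 f df -> is_derive s 1 g dg ->
  is_derive s 1 (fun r => dotv (f r) (g r)) (dotv df (g s) + dotv (f s) dg).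
Proof.
move=> fdf gdg.
have -> : (fun r => dotv (f r) (g r)) =
    \sum_(i < n) ((fun r => f r 0 i) * (fun r => g r 0 i)).
  by apply/funext => r; rewrite fct_sumE.
apply: (is_derive_eq (f' := \sum_(i < n) (f s 0 i *: dg 0 i + g s 0 i *: df 0 i))).
  apply: is_derive_sum => i.
  exact: is_deriveM (is_derive_coord i fdf) (is_derive_coord i gdg).
rewrite /dotv -big_split /=; apply: eq_bigr => i _.
by rewrite addrC (mulrC (df 0 i)).
Qed.

End VectorDerivatives.

Lemma quadratic_slope_le0 {R : realFieldType} (D Q : R) : 0 <= Q ->
  (forall t, 0 < t <= 1 -> t * D - t ^+ 2 * Q <= 0) -> D <= 0.
Proof.
move=> Q_ge0 slope; rewrite leNgt; apply/negP => D_gt0.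
have DQ_gt0 : 0 < D + Q by lra.
pose t := D / (D + Q).
have t_gt0 : 0 < t by rewrite divr_gt0.
have t_le1 : t <= 1 by rewrite ler_pdivrMr // mul1r; lra.
have tQ : t * Q = D - t * D by rewrite /t; field; lra.
have := slope t; rewrite t_gt0 t_le1 => /(_ isT).
rewrite expr2 -mulrA tQ.
have := mulr_gt0 (mulr_gt0 t_gt0 t_gt0) D_gt0; lra.
Qed.

Section Simplex.
Context {R : realType} {m : nat}.

Definition simplex : set 'rV[R]_m :=
  [set l | (forall i, 0 <= l 0 i) /\ \sum_(i < m) l 0 i = 1].

Lemma simplex_delta j : simplex (delta_mx 0 j).
Proof.
split=> [i|]; first by rewrite mxE ler0n.
rewrite (bigD1 j) //= big1 ?addr0; first by rewrite mxE !eqxx.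
by move=> k /negbTE kj; rewrite mxE kj andbF.
Qed.

Lemma simplex_convex l l' t : simplex l -> simplex l' -> 0 <= t <= 1 ->
  simplex ((1 - t) *: l + t *: l').
Proof.
move=> [l_ge0 l_sum] [l'_ge0 l'_sum] /andP[t_ge0 t_le1]; split=> [i|].
  by rewrite !mxE addr_ge0 // mulr_ge0 // subr_ge0.
under eq_bigr do rewrite !mxE.
by rewrite big_split /= -!mulr_sumr l_sum l'_sum; ring.
Qed.

Lemma simplex_compact : compact simplex.
Proof.
have simplex_closed : closed simplex.
  have -> : simplex = \bigcap_i [set l | 0 <= l 0 i] `&`
      (fun l => \sum_(i < m) l 0 i) @^-1` [set 1].
    apply/seteqP; split=> l [l_ge0 l_sum]; split=> // i.
      by move=> _; exact: l_ge0.
    exact: l_ge0.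
  apply: closedI.
    apply: closed_bigI => i _; apply: preimage_closed (@closed_ge R 0).
    by move=> l _; exact: coord_continuous.
  apply: preimage_closed (@closed_eq R 1) => l _.
  apply: (@cvg_big _ _ _ _ _ add_continuous _ (nbhs l) _ _ _ _) => i _.
  exact: coord_continuous.
apply: (@subclosed_compact _ _
  [set l : 'rV[R]_m | forall i, l ord0 i \in `[(0 : R), 1]]).
- exact: simplex_closed.
- apply: (@rV_compact _ _ (fun=> `[(0 : R), 1]%classic)) => _.
  exact: segment_compact.
move=> l [l_ge0 l_sum] i /=.
rewrite in_itv /= l_ge0 -l_sum (bigD1 i) //= lerDl.
by apply: sumr_ge0 => k _; exact: l_ge0.
Qed.

End Simplex.

Section FiniteMinty.
Context {R : realType} {n m : nat}.
Variables b c : 'I_m -> 'rV[R]_n.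
Implicit Types l : 'rV[R]_m.

Definition wdot l := \sum_(i < m) l 0 i * dotv (c i) (b i).
Definition wavg (v : 'I_m -> 'rV[R]_n) l := \sum_(i < m) l 0 i *: v i.
Definition wsum l := wavg (fun i => b i + c i) l.
Definition wgap l := wdot l - dotv (wsum l) (wsum l) / 4.

Lemma wdot_comb (x y : R) l l' : wdot (x *: l + y *: l') = x * wdot l + y * wdot l'.
Proof.
rewrite /wdot !mulr_sumr -big_split; apply: eq_bigr => i _; rewrite !mxE /=; ring.
Qed.

Lemma wsum_comb (x y : R) l l' : wsum (x *: l + y *: l') = x *: wsum l + y *: wsum l'.
Proof.
rewrite /wsum /wavg !scaler_sumr -big_split; apply: eq_bigr => i _.
by rewrite !mxE /= scalerDl !scalerA.
Qed.

Lemma wdot_delta j : wdot (delta_mx 0 j) = dotv (c j) (b j).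
Proof.
rewrite /wdot (bigD1 j) //= big1 ?addr0; first by rewrite mxE !eqxx mul1r.
by move=> k /negbTE kj; rewrite mxE kj andbF mul0r.
Qed.

Lemma wsum_delta j : wsum (delta_mx 0 j) = b j + c j.
Proof.
rewrite /wsum /wavg (bigD1 j) //= big1 ?addr0; first by rewrite mxE !eqxx scale1r.
by move=> k /negbTE kj; rewrite mxE kj andbF scale0r.
Qed.

Lemma continuous_wgap : continuous wgap.
Proof.
move=> l.
have wdot_l : wdot x @[x --> l] --> wdot l.
  rewrite /wdot.
  apply: (@cvg_big _ _ _ _ _ add_continuous _ (nbhs l) _ _ _ _) => i _.
  by apply: cvgMr_tmp; exact: coord_continuous.
have wsum_l : wsum x @[x --> l] --> wsum l.
  rewrite /wsum /wavg.
  apply: (@cvg_big _ _ _ _ _ add_continuous _ (nbhs l) _ _ _ _) => i _.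
  by apply: cvgZr_tmp; exact: coord_continuous.
have := cvgB wdot_l (@cvgMr_tmp _ _ _ _ _ _ 4^-1 (cvg_dotv wsum_l wsum_l)).
exact.
Qed.

Lemma wgap_segment l l' t :
  wgap ((1 - t) *: l + t *: l') = wgap l
    + t * (wdot l' - wdot l - dotv (wsum l) (wsum l' - wsum l) / 2)
    - t ^+ 2 * (dotv (wsum l' - wsum l) (wsum l' - wsum l) / 4).
Proof.
rewrite /wgap wdot_comb wsum_comb.
move: (wsum l) (wsum l') => V V'.
rewrite !(dotvDl, dotvDr, dotvNl, dotvNr, dotvZl, dotvZr) (dotvC V' V); by field.
Qed.

Lemma weighted_cross_sum l : \sum_(i < m) l 0 i = 1 ->
  \sum_(i < m) l 0 i * \sum_(j < m) l 0 j * dotv (c i - c j) (b i - b j)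
    = 2 * wdot l - 2 * dotv (wavg c l) (wavg b l).
Proof.
move=> l_sum; set B := wavg b l; set C := wavg c l.
have dotv_Cl w : \sum_(i < m) l 0 i * dotv (c i) w = dotv C w.
  by rewrite dotv_suml; apply: eq_bigr => i _; rewrite dotvZl.
have dotv_Br w : \sum_(i < m) l 0 i * dotv w (b i) = dotv w B.
  by rewrite dotv_sumr; apply: eq_bigr => i _; rewrite dotvZr.
have inner_sum w v : \sum_(j < m) l 0 j * dotv (w - c j) (v - b j) =
    dotv w v - dotv w B - dotv C v + wdot l.
  transitivity (\sum_(j < m) (l 0 j * dotv w v - l 0 j * dotv w (b j)
      - l 0 j * dotv (c j) v + l 0 j * dotv (c j) (b j))).
    by apply: eq_bigr => j _; rewrite dotvBl !dotvBr; ring.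
  by rewrite big_split !sumrB /= -mulr_suml l_sum mul1r dotv_Br dotv_Cl.
under eq_bigr do rewrite inner_sum.
transitivity (\sum_(i < m) (l 0 i * dotv (c i) (b i) - l 0 i * dotv (c i) B
    - l 0 i * dotv C (b i) + l 0 i * wdot l)).
  by apply: eq_bigr => i _; ring.
rewrite big_split !sumrB /= -mulr_suml l_sum mul1r dotv_Br dotv_Cl.
by rewrite -/(wdot l); ring.
Qed.

Hypothesis antimono : forall i j, dotv (c i - c j) (b i - b j) <= 0.

Lemma wgap_le0 l : simplex l -> wgap l <= 0.
Proof.
move=> [l_ge0 l_sum].
have cross_sum_le0 :
    \sum_(i < m) l 0 i * \sum_(j < m) l 0 j * dotv (c i - c j) (b i - b j) <= 0.
  rewrite -oppr_ge0 -sumrN; apply: sumr_ge0 => i _.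
  rewrite -mulrN mulr_ge0 // -sumrN; apply: sumr_ge0 => j _.
  by rewrite -mulrN mulr_ge0 // oppr_ge0 antimono.
move: cross_sum_le0; rewrite weighted_cross_sum // /wgap.
have -> : wsum l = wavg b l + wavg c l.
  by rewrite /wsum /wavg -big_split; apply: eq_bigr => i _; rewrite scalerDr.
have := dotvv_ge0 (wavg b l - wavg c l).
move: (wavg b l) (wavg c l) => B C.
rewrite !(dotvDl, dotvDr, dotvNl, dotvNr) (dotvC B C); lra.
Qed.

Lemma finite_minty : exists p, forall j, 0 <= dotv (c j - p) (p - b j).
Proof.
have [m0|m_gt0] := posnP m.
  by exists 0 => j; move: (ltn_ord j); rewrite {2}m0.
have [l l_simplex l_max] :
    exists2 l : 'rV[R]_m, simplex l & forall l', simplex l' -> wgap l' <= wgap l.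
  have simplex_n0 : @simplex R m !=set0.
    by exists (delta_mx 0 (Ordinal m_gt0)); exact: simplex_delta.
  have wgap_within : {within simplex, continuous wgap}.
    by apply: continuous_subspaceT; exact: continuous_wgap.
  have [l] := EVT_max_rV simplex_n0 simplex_compact wgap_within.
  rewrite inE => l_simplex l_max; exists l => // l' l'_simplex.
  by apply: l_max; rewrite inE.
exists (2^-1 *: wsum l) => j.
pose e : 'rV[R]_m := delta_mx 0 j.
have slope_le0 : wdot e - wdot l - dotv (wsum l) (wsum e - wsum l) / 2 <= 0.
  apply: (@quadratic_slope_le0 _ _ (dotv (wsum e - wsum l) (wsum e - wsum l) / 4)).
    by rewrite divr_ge0 ?dotvv_ge0.
  move=> t /andP[t_gt0 t_le1].
  have lt_simplex : simplex ((1 - t) *: l + t *: e).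
    by apply: simplex_convex => //; [exact: simplex_delta | rewrite ltW].
  by have := l_max _ lt_simplex; rewrite wgap_segment; lra.
have := wgap_le0 _ l_simplex.
move: slope_le0; rewrite /wgap /e wdot_delta wsum_delta.
move: (wsum l) (wdot l) => V K.
rewrite !(dotvDl, dotvDr, dotvNl, dotvNr, dotvZl, dotvZr) (dotvC (c j) V); lra.
Qed.

End FiniteMinty.

Section Minty.
Context {R : realType} {n : nat}.
Implicit Types (A : 'rV[R]_n -> set 'rV[R]_n) (a u x y z : 'rV[R]_n).

Definition monotonically_related A x u :=
  forall a a', A a a' -> 0 <= dotv (u - a') (x - a).

Lemma maximally_monotone_related A x u :
  maximally_monotone A -> monotonically_related A x u -> A x u.
Proof.
move=> [monA maxA] xu_rel.
pose B z w := A z w \/ (z = x /\ w = u).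
have monB : monotone_op B.
  move=> z1 z2 w1 w2 [Azw1|[-> ->]] [Azw2|[-> ->]].
  - exact: monA Azw1 Azw2.
  - by rewrite -[w1 - u]opprB -[z1 - x]opprB dotvNl dotvNr opprK; exact: xu_rel.
  - exact: xu_rel.
  - by rewrite subrr dotv0l.
by rewrite -(maxA B monB (fun z w Azw => or_introl Azw)); right.
Qed.

Lemma dotv_ball_identity z a p :
  dotv (z - p) (p - a) =
  dotv (z - a) (z - a) / 4 - dotv (p - 2^-1 *: (z + a)) (p - 2^-1 *: (z + a)).
Proof.
rewrite !(dotvDl, dotvDr, dotvNl, dotvNr, dotvZl, dotvZr).
by rewrite (dotvC p z) (dotvC a z) (dotvC p a); field.
Qed.

Lemma continuous_dotv_affine z a :
  continuous (fun p : 'rV[R]_n => dotv (z - p) (p - a)).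
Proof.
have zB : continuous (fun p : 'rV[R]_n => z - p).
  by move=> p; apply: continuousB; [exact: cst_continuous | exact: cvg_id].
have Ba : continuous (fun p : 'rV[R]_n => p - a).
  by move=> p; apply: continuousB; [exact: cvg_id | exact: cst_continuous].
by move=> p; exact: cvg_dotv (zB p) (Ba p).
Qed.

Lemma closed_dotv_ge0 z a : closed [set p : 'rV[R]_n | 0 <= dotv (z - p) (p - a)].
Proof.
apply: preimage_closed (@closed_ge R 0) => p _.
exact: continuous_dotv_affine.
Qed.

Lemma compact_dotv_ge0 z a : compact [set p : 'rV[R]_n | 0 <= dotv (z - p) (p - a)].
Proof.
pose c := 2^-1 *: (z + a); pose r := dotv (z - a) (z - a) / 4.
have r_ge0 : 0 <= r by rewrite divr_ge0 // dotvv_ge0.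
apply: (@subclosed_compact _ _
  [set p : 'rV[R]_n | forall i, p ord0 i \in `[c 0 i - (r + 1), c 0 i + (r + 1)]]).
- exact: closed_dotv_ge0.
- apply: (@rV_compact _ _ (fun i => `[c 0 i - (r + 1), c 0 i + (r + 1)]%classic)).
  by move=> i; exact: segment_compact.
move=> p /=; rewrite dotv_ball_identity -/c -/r => p_ball i.
have sqr_le : (p 0 i - c 0 i) ^+ 2 <= r.
  have := sqr_coord_le_dotv (p - c) i; rewrite !mxE; lra.
have : `|p 0 i - c 0 i| <= r + 1.
  rewrite -(ler_pXn2r (n := 2)) ?nnegrE ?normr_ge0 ?real_normK ?num_real //; first nra.
  lra.
by rewrite ler_norml in_itv /= => /andP[? ?]; apply/andP; split; lra.
Qed.

Lemma finite_monotonically_related A y (s : seq ('rV[R]_n * 'rV[R]_n)) :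
  monotone_op A -> (forall q, q \in s -> A q.1 q.2) ->
  exists p, forall q, q \in s -> 0 <= dotv (y - q.2 - p) (p - q.1).
Proof.
move=> monA s_in_A.
pose b (i : 'I_(size s)) := (nth 0 s i).1.
pose c (i : 'I_(size s)) := y - (nth 0 s i).2.
have mono i j : dotv (c i - c j) (b i - b j) <= 0.
  have := monA _ _ _ _ (s_in_A _ (mem_nth 0 (ltn_ord i)))
    (s_in_A _ (mem_nth 0 (ltn_ord j))).
  rewrite /c /b -oppr_le0 -dotvNl opprB => mono_ij.
  by rewrite opprB addrC addrA subrK.
have [p p_rel] := finite_minty b c mono.
exists p => q q_in_s.
have q_idx : (index q s < size s)%N by rewrite index_mem.
by have := p_rel (Ordinal q_idx); rewrite /c /b /= nth_index.
Qed.

Lemma exists_monotonically_related A a0 u0 y : monotone_op A -> A a0 u0 ->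
  exists p, monotonically_related A p (y - p).
Proof.
move=> monA A_au0.
pose half (q : 'rV[R]_n * 'rV[R]_n) := [set p | 0 <= dotv (y - q.2 - p) (p - q.1)].
pose D := [set q : 'rV[R]_n * 'rV[R]_n | A q.1 q.2].
have [p p_in] : \bigcap_(q in D) (half (a0, u0) `&` half q) !=set0.
  move: (compact_dotv_ge0 (y - u0) a0); rewrite compact_In0; apply.
    by exists half => // q _; exact: closed_dotv_ge0.
  move=> D' D'_sub_D.
  have [|p p_rel] := finite_monotonically_related A y
    ((a0, u0) :: finmap.enum_fset D') monA.
    move=> q; rewrite inE => /orP[/eqP -> //|q_in_D'].
    by have := D'_sub_D q q_in_D'; rewrite inE.
  exists p => q /= q_in_D'; split; apply: p_rel; rewrite inE ?eqxx //.
  by rewrite q_in_D' orbT.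
exists p => a a' A_aa'; have [_] := p_in (a, a') A_aa'.
by rewrite /= addrAC.
Qed.

Lemma minty_surjective A a0 u0 y : maximally_monotone A -> A a0 u0 ->
  exists p, A p (y - p).
Proof.
move=> maxA A_au0.
have [p p_rel] := exists_monotonically_related _ _ _ y maxA.1 A_au0.
by exists p; exact: maximally_monotone_related.
Qed.

End Minty.

Lemma diff_monotone_ge0 {R : realType} {n : nat} (f : 'rV[R]_n -> 'rV[R]_n) x h :
  (forall x y, 0 <= dotv (f x - f y) (x - y)) -> differentiable f x ->
  0 <= dotv ('d f x h) h.
Proof.
move=> monf fd; rewrite -deriveE //.
pose q r := dotv (r^-1 *: ((f \o shift x) (r *: h) - f x)) h.
have q_cvg : q r @[r --> (0 : R)^'] --> dotv ('D_h f x) h.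
  exact: cvg_dotv (@diff_derivable R _ _ f x h fd) (cvg_cst h).
apply: (closed_cvg (u_ := q) [set r : R | 0 <= r] (@closed_ge R 0) _ _ q_cvg).
near=> r.
have r_neq0 : r != 0 by near: r; exact: nbhs_dnbhs_neq.
have := monf (r *: h + x) x; rewrite addrK dotvZr /q dotvZl.
move=> rd_ge0 /=.
rewrite (_ : r^-1 * _ = r * dotv (f (r *: h + x) - f x) h / r ^+ 2); last by field.
by rewrite divr_ge0 ?sqr_ge0.
Unshelve. all: by end_near.
Qed.

Section Yosida.
Context {R : realType} {n : nat}.
Variable A : 'rV[R]_n -> set 'rV[R]_n.
Implicit Types x y : 'rV[R]_n.

Lemma resolventP a0 u0 : maximally_monotone A -> A a0 u0 ->
  forall x, A (resolvent A x) (x - resolvent A x).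
Proof.
move=> maxA A_au0 x; rewrite /resolvent.
by have := xgetPex 0 (minty_surjective _ _ _ x maxA A_au0).
Qed.

Hypotheses (monA : monotone_op A)
  (resolvent_graph : forall x, A (resolvent A x) (x - resolvent A x)).

Lemma yosida_firmly_nonexpansive x y :
  dotv (yosida A x - yosida A y) (yosida A x - yosida A y)
    <= dotv (yosida A x - yosida A y) (x - y).
Proof.
have := monA _ _ _ _ (resolvent_graph x) (resolvent_graph y).
have -> : x - y = (yosida A x - yosida A y) + (resolvent A x - resolvent A y).
  by rewrite /yosida addrACA subrK -opprD subrK.
set Y := yosida A x - yosida A y; move=> mono_xy.
by rewrite dotvDr; lra.
Qed.

Lemma yosida_monotone x y : 0 <= dotv (yosida A x - yosida A y) (x - y).
Proof. exact: le_trans (dotvv_ge0 _) (yosida_firmly_nonexpansive x y). Qed.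

Lemma yosida_zero_dotv xs x : A xs 0 ->
  dotv (yosida A x) (yosida A x) <= dotv (yosida A x) (x - xs).
Proof.
move=> A_xs; have := monA _ _ _ _ (resolvent_graph x) A_xs; rewrite subr0 => mono_x.
have -> : x - xs = yosida A x + (resolvent A x - xs) by rewrite /yosida addrA subrK.
by rewrite dotvDr; lra.
Qed.

End Yosida.

Section Lyapunov.
Context {R : realType} {n : nat}.
Variables (A : 'rV[R]_n -> set 'rV[R]_n) (xs : 'rV[R]_n) (X : R -> 'rV[R]_n).
Hypotheses (maxA : maximally_monotone A) (A_xs : A xs 0)
  (yosida_diff : forall x, differentiable (yosida A) x)
  (X_cont : {within `[0, +oo[, continuous X})
  (X_deriv : forall s : R, 0 < s -> is_derive s 1 X (- yosida A (X s))).

Definition lyapunov (s : R) :=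
  s * dotv (yosida A (X s)) (yosida A (X s)) + 2^-1 * dotv (X s - xs) (X s - xs).

Lemma is_derive_lyapunov (s : R) : 0 < s ->
  let y := yosida A (X s) in
  is_derive s 1 lyapunov
    (dotv y y - dotv y (X s - xs) - 2 * s * dotv ('d (yosida A) (X s) y) y).
Proof.
move=> s_gt0 y.
have dY : is_derive s 1 (yosida A \o X) ('d (yosida A) (X s) (- y)).
  exact: is_derive_comp (X_deriv s s_gt0) (yosida_diff (X s)).
have dXxs : is_derive s 1 (fun r => X r - xs) (- y).
  apply: is_derive_eq (is_deriveB (X_deriv s s_gt0) (is_derive_cst xs s 1)) _.
  by rewrite subr0.
have := is_deriveD (is_deriveM (is_derive_id s 1) (is_derive_dotv dY dY))
  (is_deriveM (is_derive_cst (2^-1 : R) s 1) (is_derive_dotv dXxs dXxs)).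
move=> /is_derive_eq; apply.
rewrite /GRing.scale /= linearN /= !(dotvNl, dotvNr) (dotvC (X s - xs)).
by rewrite (dotvC y ('d (yosida A) (X s) y)); field.
Qed.

Lemma lyapunov_derive_le0 (s : R) : 0 < s -> 'D_1 lyapunov s <= 0.
Proof.
move=> s_gt0; have [_ ->] := is_derive_lyapunov s s_gt0.
set y := yosida A (X s).
have resolvent_graph := resolventP _ _ _ maxA A_xs.
have d_ge0 : 0 <= dotv ('d (yosida A) (X s) y) y.
  apply: diff_monotone_ge0 (yosida_diff _).
  exact: yosida_monotone maxA.1 resolvent_graph.
have := yosida_zero_dotv A maxA.1 resolvent_graph xs (X s) A_xs.
have := mulr_ge0 (ltW s_gt0) d_ge0; lra.
Qed.

Lemma continuous_lyapunov t : {within `[0, t], continuous lyapunov}.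
Proof.
have X_cont_t : {within `[0, t], continuous X}.
  by apply: continuous_subspaceW X_cont => r /=; rewrite !in_itv /= => /andP[-> _].
move=> r; have Xr := X_cont_t r.
have Yr : {for r, continuous (yosida A \o X : subspace `[0, t] -> _)}.
  exact: continuous_comp Xr (differentiable_continuous (yosida_diff _)).
have Xxs : {for r, continuous ((X - cst xs) : subspace `[0, t] -> _)}.
  by apply: continuousB => //; exact: cst_continuous.
have id_cont : {within `[0, t], continuous (@id R)}.
  by apply: continuous_subspaceT => x; exact: cvg_id.
have := continuousD (continuousM (id_cont r) (cvg_dotv Yr Yr))
  (continuousM (cvg_cst (2^-1 : R)) (cvg_dotv Xxs Xxs)).
exact.
Qed.

Lemma lyapunov_le t : 0 <= t -> lyapunov t <= lyapunov 0.
Proof.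
move=> t_ge0; apply: (ler0_derive1_le_cc (a := 0) (b := t)).
- move=> r; rewrite in_itv /= => /andP[r_gt0 _].
  by have [] := is_derive_lyapunov r r_gt0.
- move=> r; rewrite in_itv /= => /andP[r_gt0 _].
  by rewrite derive1E; exact: lyapunov_derive_le0.
- exact: continuous_lyapunov.
- by rewrite in_itv /= lexx t_ge0.
- by rewrite in_itv /= lexx t_ge0.
- exact: t_ge0.
Qed.

End Lyapunov.

Theorem theorem3 (R : realType) (n : nat) (A : 'rV[R]_n -> set 'rV[R]_n)
  (xstar x0 : 'rV[R]_n) (X : R -> 'rV[R]_n) :
  maximally_monotone A ->
  A xstar 0 ->
  (forall x, differentiable (yosida A) x) ->
  X 0 = x0 ->
  {within `[0, +oo[, continuous X} ->
  (forall t : R, 0 < t -> is_derive t 1 X (resolvent A (X t) - X t)) ->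
  forall t : R, 0 < t ->
    enorm ('D_1 X t) ^+ 2 = enorm (yosida A (X t)) ^+ 2 /\
    enorm (yosida A (X t)) ^+ 2 <= enorm (x0 - xstar) ^+ 2 / (2 * t).
Proof.
move=> maxA A_xstar yosida_diff X0 X_cont X_ode t t_gt0.
have X_deriv (s : R) : 0 < s -> is_derive s 1 X (- yosida A (X s)).
  by move=> /X_ode; rewrite /yosida opprB.
split; first by have [_ ->] := X_deriv t t_gt0; rewrite enormN.
have := lyapunov_le _ _ _ maxA A_xstar yosida_diff X_cont X_deriv t (ltW t_gt0).
rewrite /lyapunov mul0r add0r X0 !sqr_enorm ler_pdivlMr ?mulr_gt0 //.
have := dotvv_ge0 (X t - xstar); lra.
Qed.
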